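(* Let $x$ be a grid function with $x_s\neq 0$ at every node that satisfies the scheme (S) with $\check B\equiv 0$. Then at every node the discrete center-of-mass law $$(t\,x_t-x)_{\check t}+\Big(t\,(\hat x_s\check x_s)^{-1}-t\,\alpha^2 x_s\Big)_{\bar s}=0$$ holds (here $t$ is the time coordinate of the node, so $(t x_t-x)_{\check t}=\big(t x_t-x-(t-\tau)\check x_t+\check x\big)/\tau$).
   Context: Fix mesh steps $\tau>0$, $h>0$ and a constant $\alpha\in\mathbb R$. A grid function is a real-valued function $f=f(t,s)$ on the uniform orthogonal mesh $\{(n\tau,kh): n,k\in\mathbb Z\}$; at the node $(n\tau,kh)$ the symbol $t$ denotes the number $n\tau$. Shifts: $\hat f=f(t+\tau,s)$, $\check f=f(t-\tau,s)$, $f^+=f_+=f(t,s+h)$, $f^-=f_-=f(t,s-h)$; a shift applied to a composite expression shifts the whole expression (e.g. $\hat x_s$ is $x_s$ evaluated at $(t+\tau,s)$, $\check x_t$ is $x_t$ evaluated at $(t-\tau,s)$, $x_t^+$ is $x_t$ evaluated at $(t,s+h)$). Differences: $f_t=(\hat f-f)/\tau$, $f_{\check t}=(f-\check f)/\tau$, $f_s=(f_+-f)/h$, $f_{\bar s}=(f-f_-)/h$; iterated differences compose, e.g. $x_{t\check t}=(x_t)_{\check t}=(\hat x-2x+\check x)/\tau^2$ and $x_{s\bar s}=(x_s)_{\bar s}=(x_+-2x+x_-)/h^2$. Given a grid function $x$ with $x_s\neq0$ everywhere and a grid function $\check B$ (an approximation of the bottom-slope term), the scheme (S) is the requirement that at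 every node $$x_{t\check t}-\alpha^2x_{s\bar s}+\Big(\frac{1}{\hat x_s\check x_s}\Big)_{\bar s}-\check B=0 .$$ *)

From Stdlib Require Import Reals ZArith.
Open Scope R_scope.

(* A grid function on the mesh {(n tau, k h) : n,k in Z}: value at node (n,k). *)
Definition grid := Z -> Z -> R.

Definition hat   (f : grid) : grid := fun n k => f (n + 1)%Z k.
Definition check (f : grid) : grid := fun n k => f (n - 1)%Z k.
Definition splus (f : grid) : grid := fun n k => f n (k + 1)%Z.
Definition sminus (f : grid) : grid := fun n k => f n (k - 1)%Z.

Definition dt    (tau : R) (f : grid) : grid := fun n k => (hat f n k - f n k) / tau.
Definition dtb   (tau : R) (f : grid) : grid := fun n k => (f n k - check f n k) / tau.
Definition ds    (h : R) (f : grid) : grid := fun n k => (splus f n k - f n k) / h.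
Definition dsb   (h : R) (f : grid) : grid := fun n k => (f n k - sminus f n k) / h.

Definition tgrid (tau : R) : grid := fun n _ => IZR n * tau.

(* Scheme (S) with a given bottom term Bc (the grid function \check B):
   x_{t check t} - alpha^2 x_{s bar s} + (1/(hat x_s * check x_s))_{bar s} - Bc = 0 *)
Definition scheme_S (tau h alpha : R) (Bc x : grid) : Prop :=
  forall n k : Z,
    dtb tau (dt tau x) n k
    - alpha ^ 2 * dsb h (ds h x) n k
    + dsb h (fun n' k' => 1 / (hat (ds h x) n' k' * check (ds h x) n' k')) n k
    - Bc n k = 0.

(* The law is the
   scheme multiplied by t, rewritten in divergence form.  Two elementary
   facts about the difference operators make this work:
   - a discrete product rule in time, (t f)_{check t} = t f_{check t} + check f,
     which together with check(x_t) = x_{check t} yields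
     (t x_t - x)_{check t} = t x_{t check t};
   - the spatial backward difference commutes with multiplication by any
     factor depending on the time index only, such as t, so
     (t G)_{bar s} = t G_{bar s}. *)

From Stdlib Require Import Reals ZArith Lra.
Open Scope R_scope.

Lemma dtb_minus (tau : R) (f g : grid) (n k : Z) :
  dtb tau (fun n' k' => f n' k' - g n' k') n k = dtb tau f n k - dtb tau g n k.
Proof. unfold dtb, check, Rdiv. ring. Qed.

Lemma dsb_minus (h : R) (f g : grid) (n k : Z) :
  dsb h (fun n' k' => f n' k' - g n' k') n k = dsb h f n k - dsb h g n k.
Proof. unfold dsb, sminus, Rdiv. ring. Qed.

Lemma dsb_time_factor (h : R) (c : Z -> R) (f : grid) (n k : Z) :
  dsb h (fun n' k' => c n' * f n' k') n k = c n * dsb h f n k.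
Proof. unfold dsb, sminus, Rdiv. ring. Qed.

Lemma check_dt (tau : R) (f : grid) (n k : Z) :
  check (dt tau f) n k = dtb tau f n k.
Proof.
  unfold check, dt, dtb, hat.
  now replace (n - 1 + 1)%Z with n by ring.
Qed.

Lemma dtb_time_weight (tau : R) (f : grid) (n k : Z) :
  tau <> 0 ->
  dtb tau (fun n' k' => tgrid tau n' k' * f n' k') n k
  = tgrid tau n k * dtb tau f n k + check f n k.
Proof.
  intros Htau. unfold dtb, tgrid, check.
  rewrite minus_IZR. field. exact Htau.
Qed.

Lemma dtb_moment (tau : R) (x : grid) (n k : Z) :
  tau <> 0 ->
  dtb tau (fun n' k' => tgrid tau n' k' * dt tau x n' k' - x n' k') n k
  = tgrid tau n k * dtb tau (dt tau x) n k.
Proof.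
  intros Htau.
  rewrite dtb_minus, (dtb_time_weight tau (dt tau x) n k Htau), check_dt.
  ring.
Qed.

Lemma dsb_moment (tau h alpha : R) (x : grid) (n k : Z) :
  dsb h (fun n' k' =>
       tgrid tau n' k' * / (hat (ds h x) n' k' * check (ds h x) n' k')
       - tgrid tau n' k' * alpha ^ 2 * ds h x n' k') n k
  = tgrid tau n k *
      (dsb h (fun n' k' => 1 / (hat (ds h x) n' k' * check (ds h x) n' k')) n k
       - alpha ^ 2 * dsb h (ds h x) n k).
Proof.
  rewrite dsb_minus.
  rewrite (dsb_time_factor h (fun n' => IZR n' * tau)
             (fun n' k' => / (hat (ds h x) n' k' * check (ds h x) n' k'))).
  rewrite (dsb_time_factor h (fun n' => IZR n' * tau * alpha ^ 2) (ds h x)).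
  unfold tgrid, dsb, sminus, Rdiv. ring.
Qed.

Theorem mainTheorem2 (tau h alpha : R) (Htau : 0 < tau) (Hh : 0 < h) (x : grid)
  (Hxs : forall n k : Z, ds h x n k <> 0)
  (HS : scheme_S tau h alpha (fun _ _ => 0) x) :
  forall n k : Z,
    dtb tau (fun n' k' => tgrid tau n' k' * dt tau x n' k' - x n' k') n k
    + dsb h (fun n' k' =>
         tgrid tau n' k' * / (hat (ds h x) n' k' * check (ds h x) n' k')
         - tgrid tau n' k' * alpha ^ 2 * ds h x n' k') n k = 0.
Proof.
  intros n k.
  assert (Htau0 : tau <> 0) by lra.
  rewrite (dtb_moment tau x n k Htau0), dsb_moment.
  specialize (HS n k).
  rewrite <- (Rmult_0_r (tgrid tau n k)), <- HS.
  ring.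
Qed.
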